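(* Let $X$ be a Banach space and let $h$ be a metric functional of $X$ (with base point $0$). Then there is a continuous linear functional $f$ on $X$ of norm at most $1$ such that $f(x)\leq h(x)$ for all $x\in X$.
   Context: For $y\in X$ let $h_y(x)=\|x-y\|-\|y\|$. Endow $\mathbb{R}^X$ with the topology of pointwise convergence. A metric functional of $X$ is an element of the closure of $\{h_y: y\in X\}$ in $\mathbb{R}^X$. *)

From HB Require Import structures.
From mathcomp Require Import all_boot all_order all_algebra.
From mathcomp Require Import all_classical all_reals all_analysis.
Set Implicit Arguments. Unset Strict Implicit. Unset Printing Implicit Defensive.
Import Order.TTheory GRing.Theory Num.Theory.
Import numFieldNormedType.Exports.
Local Open Scope classical_set_scope.
Local Open Scope ring_scope.

Definition hfun {R : realType} {X : normedModType R} (y : X) : {ptws X -> R} :=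
  fun x : X => `|x - y| - `|y|.

Definition metric_functional {R : realType} {X : normedModType R}
    (h : {ptws X -> R}) : Prop :=
  closure (range (@hfun R X)) h.

From HB Require Import structures.
From mathcomp Require Import all_boot all_order all_algebra.
From mathcomp Require Import all_classical all_reals all_analysis.
From mathcomp Require Import ring lra.
Import Order.TTheory GRing.Theory Num.Theory.
Import numFieldNormedType.Exports.
Local Open Scope classical_set_scope.
Local Open Scope ring_scope.

(* Every inequality between finitely many values h_y(x) that holds for all y
   passes to pointwise limits; in particular a metric functional h satisfies
   |h x| <= |x| and is convex.  Then q x := inf_(t > 0) h (t x) / t is
   sublinear and below h, and the Hahn-Banach theorem yields a linear f <= q.
   From f x <= h x <= |x| applied to x and -x we get |f x| <= |x|, so f is
   bounded, hence continuous. *)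

Lemma closure_ge0 {R : realType} {T : topologicalType} (A : set T) (P : T -> R) :
  continuous P -> (forall g, A g -> 0 <= P g) -> forall g, closure A g -> 0 <= P g.
Proof.
move=> cP AP g Ag.
have closed_preim : closed (P @^-1` [set r : R | 0 <= r]).
  by apply: preimage_closed => [x _|]; [exact: cP | exact: closed_ge].
have A_sub : A `<=` P @^-1` [set r : R | 0 <= r] by exact: AP.
by have := closureS A_sub Ag; rewrite -(closure_id _).1.
Qed.

Section MetricFunctional.
Context {R : realType} {X : normedModType R}.

Lemma ptws_eval_continuous (a : X) : continuous (fun g : {ptws X -> R} => g a).
Proof. exact: (@proj_continuous X (fun _ => R) a). Qed.

Lemma metric_functional_abs_le (h : {ptws X -> R}) (x : X) :
  metric_functional h -> `|h x| <= `|x|.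
Proof.
move=> mh; rewrite -subr_ge0.
apply: (@closure_ge0 R _ _ (fun g : {ptws X -> R} => `|x| - `|g x|) _ _ h mh).
  move=> g; exact: cvgB (cvg_cst _)
    (continuous_comp (ptws_eval_continuous x g) (@norm_continuous R R^o _)).
move=> _ [y _ <-]; rewrite subr_ge0 /hfun -[`|y|]normrN.
by have := ler_dist_dist (x - y) (- y); rewrite opprK subrK.
Qed.

Lemma metric_functional_convex (h : {ptws X -> R}) (l : R) (a b : X) :
  metric_functional h -> 0 <= l -> l <= 1 ->
  h (l *: a + (1 - l) *: b) <= l * h a + (1 - l) * h b.
Proof.
move=> mh l0 l1; rewrite -subr_ge0.
apply: (@closure_ge0 R _ _
  (fun g : {ptws X -> R} => l * g a + (1 - l) * g b - g (l *: a + (1 - l) *: b))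
  _ _ h mh).
  move=> g; apply: cvgB (ptws_eval_continuous _ g).
  exact: cvgD (cvgM (cvg_cst l) (ptws_eval_continuous a g))
              (cvgM (cvg_cst (1 - l)) (ptws_eval_continuous b g)).
move=> _ [y _ <-]; rewrite subr_ge0 /hfun.
have -> : l *: a + (1 - l) *: b - y = l *: (a - y) + (1 - l) *: (b - y).
  by rewrite !scalerBr addrACA -opprD -scalerDl (addrC l) subrK scale1r.
suff : `|l *: (a - y) + (1 - l) *: (b - y)| <= l * `|a - y| + (1 - l) * `|b - y|.
  by lra.
apply: le_trans (ler_normD _ _) _.
by rewrite !normrZ (ger0_norm l0) ger0_norm ?subr_ge0.
Qed.

End MetricFunctional.

Section RadialInf.
Context {R : realType} {X : normedModType R} (h : X -> R).
Hypothesis h_abs_le : forall x, `|h x| <= `|x|.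
Hypothesis h_convex : forall (l : R) (a b : X), 0 <= l -> l <= 1 ->
  h (l *: a + (1 - l) *: b) <= l * h a + (1 - l) * h b.

Definition radial_slopes (x : X) :=
  [set v : R | exists2 t, 0 < t & v = h (t *: x) / t].

(* For convex h with h 0 = 0 the slopes increase with t, so this is the
   one-sided directional derivative of h at 0. *)
Definition radial_inf (x : X) := inf (radial_slopes x).

Lemma radial_slopes_has_lbound x : has_lbound (radial_slopes x).
Proof.
exists (- `|x|) => _ [t t0 ->]; rewrite ler_pdivlMr //.
have := h_abs_le (t *: x); rewrite normrZ gtr0_norm // ler_norml; lra.
Qed.

Lemma radial_slopes_neq0 x : radial_slopes x !=set0.
Proof. by exists (h (1 *: x) / 1); exists 1. Qed.

Lemma radial_inf_le x t : 0 < t -> radial_inf x <= h (t *: x) / t.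
Proof.
by move=> t0; apply: ge_inf; [exact: radial_slopes_has_lbound | exists t].
Qed.

Lemma radial_inf_le_fun x : radial_inf x <= h x.
Proof. by have := radial_inf_le x 1 ltr01; rewrite scale1r divr1. Qed.

Lemma radial_inf_homo_ge x l : 0 < l -> l * radial_inf x <= radial_inf (l *: x).
Proof.
move=> l0; apply: lb_le_inf; first exact: radial_slopes_neq0.
move=> _ [t t0 ->]; rewrite scalerA.
have tl0 : 0 < t * l by rewrite mulr_gt0.
have -> : h ((t * l) *: x) / t = l * (h ((t * l) *: x) / (t * l)).
  by field; rewrite !gt_eqF.
by rewrite ler_pM2l //; exact: radial_inf_le.
Qed.

Lemma radial_inf_homo x l : 0 < l -> radial_inf (l *: x) = l * radial_inf x.
Proof.
move=> l0; apply/eqP; rewrite eq_le radial_inf_homo_ge // andbT.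
have il0 : 0 < l^-1 by rewrite invr_gt0.
have := radial_inf_homo_ge (l *: x) _ il0.
rewrite scalerA mulVf ?gt_eqF // scale1r => le_inv.
by have := ler_wpM2l (ltW l0) le_inv; rewrite mulrA mulfV ?gt_eqF // mul1r.
Qed.

(* Convexity with weights t2 / (t1 + t2) and t1 / (t1 + t2) puts
   s (x + y), with s = t1 t2 / (t1 + t2), between t1 x and t2 y. *)
Lemma radial_inf_addr_le x y t1 t2 : 0 < t1 -> 0 < t2 ->
  radial_inf (x + y) <= h (t1 *: x) / t1 + h (t2 *: y) / t2.
Proof.
move=> t10 t20; have t120 : 0 < t1 + t2 by rewrite addr_gt0.
pose l := t2 / (t1 + t2); pose s := t1 * t2 / (t1 + t2).
have s0 : 0 < s by rewrite /s divr_gt0 ?mulr_gt0.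
have l0 : 0 <= l by rewrite /l divr_ge0 ?ltW.
have l1 : l <= 1 by rewrite /l ler_pdivrMr // mul1r lerDr ltW.
have e : l *: (t1 *: x) + (1 - l) *: (t2 *: y) = s *: (x + y).
  by rewrite !scalerA scalerDr /l /s; congr (_ *: _ + _ *: _); field;
    rewrite gt_eqF.
have := h_convex l (t1 *: x) (t2 *: y) l0 l1; rewrite e => hs.
have -> : h (t1 *: x) / t1 + h (t2 *: y) / t2 =
          (l * h (t1 *: x) + (1 - l) * h (t2 *: y)) / s.
  by rewrite /l /s; field; rewrite !gt_eqF.
apply: le_trans (radial_inf_le _ _ s0) _.
by rewrite ler_pM2r ?invr_gt0.
Qed.

Lemma radial_inf_subadd x y : radial_inf (x + y) <= radial_inf x + radial_inf y.
Proof.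
suff : radial_inf (x + y) - radial_inf y <= radial_inf x by lra.
apply: lb_le_inf; first exact: radial_slopes_neq0.
move=> _ [t1 t10 ->].
suff : radial_inf (x + y) - h (t1 *: x) / t1 <= radial_inf y by lra.
apply: lb_le_inf; first exact: radial_slopes_neq0.
move=> _ [t2 t20 ->].
have := radial_inf_addr_le x y _ _ t10 t20; lra.
Qed.

End RadialInf.

Section HahnBanach.
Context {R : realType} {V : lmodType R} (p : V -> R).
Hypothesis p_subadd : forall x y, p (x + y) <= p x + p y.
Hypothesis p_homo : forall x t, 0 < t -> p (t *: x) = t * p x.

(* Partial linear functionals below p, represented by their graphs. *)
Definition dominated_graph (G : set (V * R)) :=
  [/\ forall x r s, G (x, r) -> G (x, s) -> r = s,
      forall a x y r s, G (x, r) -> G (y, s) -> G (a *: x + y, a * r + s) &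
      forall x r, G (x, r) -> r <= p x].

Lemma sublinear0 : p 0 = 0.
Proof. by have := p_homo 0 _ (ltr0Sn R 1); rewrite scaler0 => e; lra. Qed.

Lemma dominated_graph00 A x r : dominated_graph A -> A (x, r) -> A (0, 0).
Proof.
case=> _ cl _ Ax; have := cl (-1) _ _ _ _ Ax Ax.
by rewrite scaleN1r addNr mulN1r addNr.
Qed.

Section DominatedGraph.
Variable A : set (V * R).
Hypothesis A_dom : dominated_graph A.
Hypothesis A00 : A (0, 0).

Lemma dominated_graphZ a x r : A (x, r) -> A (a *: x, a * r).
Proof.
by case: A_dom => _ cl _ Ax; have := cl a _ _ _ _ Ax A00; rewrite !addr0.
Qed.

Lemma dominated_graphD x y r s : A (x, r) -> A (y, s) -> A (x + y, r + s).
Proof.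
by case: A_dom => _ cl _ Ax Ay; have := cl 1 _ _ _ _ Ax Ay; rewrite scale1r mul1r.
Qed.

(* The usual one-dimensional extension step: the value c of the extension at
   x0 must lie between two families of bounds, which are compatible by
   subadditivity of p. *)
Lemma dominated_graph_gap x0 : exists c,
  (forall y s, A (y, s) -> s - p (y - x0) <= c) /\
  (forall z u, A (z, u) -> c <= p (z + x0) - u).
Proof.
case: (A_dom) => _ _ A_le.
pose L := [set v | exists y s, A (y, s) /\ v = s - p (y - x0)].
have L_ub z u : A (z, u) -> ubound L (p (z + x0) - u).
  move=> Azu _ [y [s [Ays ->]]].
  have := A_le _ _ (dominated_graphD _ _ _ _ Ays Azu).
  have := p_subadd (y - x0) (z + x0).
  have -> : y - x0 + (z + x0) = y + z by rewrite addrCA subrK addrC.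
  lra.
exists (sup L); split=> [y s Ays|z u Azu].
  apply: ub_le_sup; last by exists y, s.
  by exists (p (0 + x0) - 0); apply: L_ub.
by apply: ge_sup; [exists (0 - p (0 - x0)); exists 0, 0 | apply: L_ub].
Qed.

Definition graph_extension x0 c :=
  [set q | exists t y s, A (y, s) /\ q = (t *: x0 + y, t * c + s)].

Lemma graph_extension_functional x0 c : (forall r, ~ A (x0, r)) ->
  forall x r r', graph_extension x0 c (x, r) -> graph_extension x0 c (x, r') ->
  r = r'.
Proof.
case: A_dom => A_fun _ _ nA x r r'.
move=> [t [y [s [Ays [-> ->]]]]] [t' [y' [s' [Ays' [ex ->]]]]].
have tt' : t = t'.
  apply: contrapT => /eqP; rewrite -subr_eq0 => ne.
  apply: (nA ((t - t')^-1 * (s' - s))).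
  have -> : x0 = (t - t')^-1 *: (y' - y).
    apply: (scalerI ne); rewrite scalerA divff // scale1r.
    have -> : y' = t *: x0 + y - t' *: x0 by rewrite ex addrAC subrr add0r.
    by rewrite scalerBl addrAC addrK.
  apply: dominated_graphZ; apply: dominated_graphD => //.
  by rewrite -scaleN1r -(mulN1r s); exact: dominated_graphZ.
move: ex; rewrite -tt' => /addrI ey; rewrite -ey in Ays'.
by rewrite (A_fun _ _ _ Ays Ays').
Qed.

Lemma graph_extension_le x0 c :
  (forall y s, A (y, s) -> s - p (y - x0) <= c) ->
  (forall z u, A (z, u) -> c <= p (z + x0) - u) ->
  forall t y s, A (y, s) -> t * c + s <= p (t *: x0 + y).
Proof.
case: A_dom => _ _ A_le c_ge c_le t y s Ays.
have [t_lt0|t_gt0|->] := ltgtP t 0.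
- have nt0 : 0 < - t by rewrite oppr_gt0.
  have := c_ge _ _ (dominated_graphZ (- t)^-1 _ _ Ays).
  have -> : (- t)^-1 *: y - x0 = (- t)^-1 *: (t *: x0 + y).
    by rewrite scalerDr scalerA invrN mulNr mulVf ?ltr0_neq0 // scaleN1r addrC.
  rewrite p_homo ?invr_gt0 // => le_c.
  have := ler_wpM2l (ltW nt0) le_c.
  by rewrite mulrBr !mulrA mulfV ?lt0r_neq0 // !mul1r; lra.
- have := c_le _ _ (dominated_graphZ t^-1 _ _ Ays).
  have -> : t^-1 *: y + x0 = t^-1 *: (t *: x0 + y).
    by rewrite scalerDr scalerA mulVf ?lt0r_neq0 // scale1r addrC.
  rewrite p_homo ?invr_gt0 // => c_le'.
  have := ler_wpM2l (ltW t_gt0) c_le'.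
  by rewrite mulrBr !mulrA mulfV ?lt0r_neq0 // !mul1r; lra.
- by rewrite scale0r add0r mul0r add0r; apply: A_le.
Qed.

Lemma maximal_dominated_graph_total :
  (forall B, A `<` B -> ~ dominated_graph B) -> forall x0, exists r, A (x0, r).
Proof.
move=> A_max x0; apply: contrapT => nx0.
have nA r : ~ A (x0, r) by move=> Ar; apply: nx0; exists r.
have [c [c_ge c_le]] := dominated_graph_gap x0.
apply: (A_max (graph_extension x0 c)).
  split.
    move=> [y s] Ays; exists 0, y, s; split => //.
    by rewrite scale0r add0r mul0r add0r.
  move=> ext_sub; apply: (nA c); apply: ext_sub; exists 1, 0, 0; split => //.
  by rewrite scale1r addr0 mul1r addr0.
case: A_dom => _ A_lin _; split.
- exact: graph_extension_functional.
- move=> a x y r s [t [y1 [s1 [A1 [-> ->]]]]] [t' [y2 [s2 [A2 [-> ->]]]]].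
  exists (a * t + t'), (a *: y1 + y2), (a * s1 + s2); split; first exact: A_lin.
  by congr (_, _); [rewrite scalerDr scalerA addrACA scalerDl | lra].
- by move=> x r [t [y [s [Ays [-> ->]]]]]; exact: graph_extension_le.
Qed.

End DominatedGraph.

Lemma dominated_graph_bigcup (F : set (set (V * R))) :
  F `<=` dominated_graph -> total_on F subset ->
  dominated_graph (\bigcup_(G in F) G).
Proof.
move=> F_dom F_tot; split.
- move=> x r s [G1 FG1 G1x] [G2 FG2 G2x].
  have [sub|sub] := F_tot _ _ FG1 FG2.
    by case: (F_dom _ FG2) => G_fun _ _; apply: (G_fun x); first exact: sub.
  by case: (F_dom _ FG1) => G_fun _ _; apply: (G_fun x) => //; exact: sub.
- move=> a x y r s [G1 FG1 G1x] [G2 FG2 G2y].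
  have [sub|sub] := F_tot _ _ FG1 FG2.
    by exists G2 => //; case: (F_dom _ FG2) => _ cl _; apply: cl => //; exact: sub.
  by exists G1 => //; case: (F_dom _ FG1) => _ cl _; apply: cl => //; exact: sub.
- by move=> x r [G FG Gx]; case: (F_dom _ FG) => _ _; apply.
Qed.

Lemma hahn_banach : exists f : {linear V -> R^o}, forall x, f x <= p x.
Proof.
have [A [A_dom A_max]] := Zorn_bigcup dominated_graph_bigcup.
have A00 : A (0, 0).
  apply: contrapT => nA.
  have A0 : A = set0.
    by apply/seteqP; split => // -[x r] Ax; apply: nA; exact: dominated_graph00 Ax.
  apply: (A_max [set (0, 0)]).
    by rewrite A0; split => [? //|/(_ (0, 0) erefl)].
  split.
  - by move=> x r s /= [_ ->] [_ ->].
  - by move=> a x y r s /= [-> ->] [-> ->]; rewrite scaler0 mulr0 !addr0.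
  - by move=> x r /= [-> ->]; rewrite sublinear0.
have /choice [f Af] := @maximal_dominated_graph_total A A_dom A00 A_max.
case: A_dom => A_fun A_lin A_le.
have f_lin : linear (f : V -> R^o).
  by move=> a x y; apply: (A_fun (a *: x + y)); [exact: Af | exact: A_lin].
exists (HB.pack_for {linear V -> R^o} f (GRing.isLinear.Build R V R^o *:%R f f_lin)).
by move=> x; exact: A_le (Af x).
Qed.

End HahnBanach.

Theorem lemma3p1 (R : realType) (X : completeNormedModType R)
    (h : {ptws X -> R}) :
  metric_functional h ->
  exists f : {linear X -> R^o},
    continuous f /\ (forall x : X, `|f x| <= `|x|) /\ (forall x : X, f x <= h x).
Proof.
move=> mh.
have h_abs_le x := metric_functional_abs_le h x mh.
have h_convex l a b := metric_functional_convex h l a b mh.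
have [f f_le] := hahn_banach (radial_inf h) (radial_inf_subadd _ h_abs_le h_convex)
  (radial_inf_homo _ h_abs_le).
have f_le_h x : f x <= h x := le_trans (f_le x) (radial_inf_le_fun _ h_abs_le x).
have f_abs_le x : `|f x| <= `|x|.
  have := f_le_h (- x); have := h_abs_le (- x); have := f_le_h x.
  have := h_abs_le x; rewrite raddfN normrN !ler_norml; lra.
exists f; split; last by [].
apply: bounded_linear_continuous; apply/bounded_funP => r.
by exists r => x xr; exact: le_trans (f_abs_le x) xr.
Qed.
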